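(* For every integer $t\ge 3$, the set $[3^t+11]$ admits a $3$-good partition. For $t\ge 4$ one such partition consists of the pairs $\{i,\ 3^t-i\}$ for $1\le i\le (3^t-1)/2$ with $i\notin\{3,9,12,13,14,15\}$, the singletons $\{3\}$ and $\{9\}$, the pairs $\{12,15\}$ and $\{13,14\}$, and the triples $\{3^t-3,3^t,3^t+3\}$, $\{3^t-9,3^t+1,3^t+8\}$, $\{3^t-12,3^t+5,3^t+7\}$, $\{3^t-13,3^t+2,3^t+11\}$, $\{3^t-14,3^t+4,3^t+10\}$, $\{3^t-15,3^t+6,3^t+9\}$.
   Context: A partition of $[n]=\{1,\dots,n\}$ into nonempty parts is called $3$-good if every part has at most $3$ elements and the sum of the elements of every part is a power of $3$, i.e. equals $3^s$ for some integer $s\ge 0$. *)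

From mathcomp Require Import all_boot.
Set Implicit Arguments. Unset Strict Implicit. Unset Printing Implicit Defensive.

Definition is_pow3 (m : nat) : Prop := exists s : nat, m = 3 ^ s.

(* A partition P of [n] = {1,...,n} (elements of 'I_n.+1 with value >= 1)
   into nonempty parts (MathComp's [partition] forbids the empty block),
   each part of size <= 3 with element sum a power of 3. *)
Definition three_good (n : nat) (P : {set {set 'I_n.+1}}) : Prop :=
  partition P [set i : 'I_n.+1 | 0 < val i] /\
  forall B, B \in P -> #|B| <= 3 /\ is_pow3 (\sum_(i in B) val i).

Definition explicit_parts (t : nat) : seq (seq nat) :=
  let q := 3 ^ t in
  [seq [:: i; q - i] | i <- iota 1 ((q - 1) %/ 2)
                     & i \notin [:: 3; 9; 12; 13; 14; 15]]
  ++ [:: [:: 3]; [:: 9]; [:: 12; 15]; [:: 13; 14];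
         [:: q - 3; q; q + 3];
         [:: q - 9; q + 1; q + 8];
         [:: q - 12; q + 5; q + 7];
         [:: q - 13; q + 2; q + 11];
         [:: q - 14; q + 4; q + 10];
         [:: q - 15; q + 6; q + 9]].

Definition explicit_partition (t : nat) : {set {set 'I_(3 ^ t + 11).+1}} :=
  [set B : {set 'I_(3 ^ t + 11).+1} |
     has (fun s => B == [set j : 'I_(3 ^ t + 11).+1 | val j \in s])
         (explicit_parts t)].

From mathcomp Require Import all_boot zify.
Set Implicit Arguments. Unset Strict Implicit. Unset Printing Implicit Defensive.

(* For t >= 4 put q = 3^t.  The pairs {i, q - i} with i < q/2 cover [q - 1];
   removing the pairs through 3, 9, 12, 13, 14, 15 frees their partners q - 3, ...,
   q - 15, which together with q, ..., q + 11 form six triples of sum 3q = 3^(t+1),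
   while the freed small numbers regroup as {3}, {9}, {12, 15}, {13, 14}.  For t = 3
   the same recipe collides (q - 15 = 12) and an explicit partition of [38] is used. *)

Definition ord_set n (s : seq nat) : {set 'I_n.+1} := [set j | val j \in s].

Lemma in_ord_set n (s : seq nat) (j : 'I_n.+1) : (j \in ord_set n s) = (val j \in s).
Proof. by rewrite inE. Qed.

Definition partition_of_seqs n (parts : seq (seq nat)) : {set {set 'I_n.+1}} :=
  [set B | has (fun s => B == ord_set n s) parts].

Lemma big_ord_set n (s : seq nat) (F : nat -> nat) :
  uniq s -> {in s, forall x, x <= n} ->
  \sum_(j in ord_set n s) F (val j) = \sum_(x <- s) F x.
Proof.
move=> s_uniq s_le.
rewrite (eq_bigl (fun j : 'I_n.+1 => val j \in s)) => [|j]; last by rewrite inE.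
rewrite -(big_mkord (mem s) F) -big_filter; apply/perm_big/uniq_perm => //.
  exact/filter_uniq/iota_uniq.
move=> x; rewrite mem_filter mem_iota /=.
by case xs: (x \in s) => //=; rewrite add0n ltnS s_le.
Qed.

Lemma count_le1_eq (T : eqType) (p : pred T) (l : seq T) x y :
  count p l <= 1 -> x \in l -> y \in l -> p x -> p y -> x = y.
Proof.
elim: l => //= a l IHl.
rewrite !inE => cnt /predU1P[->|xl] /predU1P[->|yl] px py //.
- suff : 0 < count p l by move: cnt; rewrite px; lia.
  by rewrite -has_count; apply/hasP; exists y.
- suff : 0 < count p l by move: cnt; rewrite py; lia.
  by rewrite -has_count; apply/hasP; exists x.
- by apply: IHl => //; move: cnt; case: (p a) => /=; lia.
Qed.

Section PartitionOfSeqs.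

Variables (n : nat) (parts : seq (seq nat)).
Hypothesis parts_size : forall {s}, s \in parts -> 0 < size s <= 3.
Hypothesis parts_uniq : forall s, s \in parts -> uniq s.
Hypothesis parts_range : forall {s x}, s \in parts -> x \in s -> 0 < x <= n.
Hypothesis parts_once :
  forall {x}, 0 < x <= n -> count (fun s => x \in s) parts = 1.
Hypothesis parts_pow3 : forall s, s \in parts -> is_pow3 (sumn s).

Let P := partition_of_seqs n parts.

Lemma mem_partition_of_seqs B :
  B \in P -> exists2 s, s \in parts & B = ord_set n s.
Proof. by rewrite inE => /hasP[s sp /eqP->]; exists s. Qed.

Lemma cover_partition_of_seqs : cover P = [set i | 0 < val i].
Proof.
apply/setP => x; rewrite inE; apply/bigcupP/idP.
  by case=> _ /mem_partition_of_seqs[s sp ->]; rewrite inE => /(parts_range sp)/andP[].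
move=> x_gt0; have : 0 < count (fun s => val x \in s) parts.
  by rewrite parts_once // x_gt0 -ltnS ltn_ord.
rewrite -has_count => /hasP[s sp xs]; exists (ord_set n s); last by rewrite inE.
by rewrite inE; apply/hasP; exists s.
Qed.

Lemma trivIset_partition_of_seqs : trivIset P.
Proof.
apply/trivIsetP => _ _ /mem_partition_of_seqs[s sp ->]
                       /mem_partition_of_seqs[s' sp' ->] neq.
rewrite disjoint_subset; apply/subsetP => x; rewrite !inE => xs.
apply/negP => xs'; move/eqP: neq; apply; congr (ord_set n _).
apply: (@count_le1_eq _ (fun s : seq nat => val x \in s) parts) => //.
by rewrite (parts_once (parts_range sp xs)).
Qed.

Lemma set0_notin_partition_of_seqs : set0 \notin P.
Proof.
apply/negP => /mem_partition_of_seqs[[|a s] sp /esym/setP E].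
  by have := parts_size sp.
have /andP[_ a_le] := parts_range sp (mem_head a s).
by have := E (inord a); rewrite in_ord_set in_set0 /= inordK ?ltnS // mem_head.
Qed.

Lemma three_good_partition_of_seqs : three_good P.
Proof.
have bigE s F : s \in parts ->
    \sum_(j in ord_set n s) F (val j) = \sum_(x <- s) F x.
  move=> sp; apply: big_ord_set; first exact: parts_uniq.
  by move=> x /(parts_range sp)/andP[].
split.
  apply/and3P; split; [apply/eqP; exact: cover_partition_of_seqs|
                       exact: trivIset_partition_of_seqs|
                       exact: set0_notin_partition_of_seqs].
move=> _ /mem_partition_of_seqs[s sp ->]; split.
  by rewrite -sum1_card (bigE s (fun=> 1)) // sum1_size; case/andP: (parts_size sp).
by rewrite (bigE s id) // -sumnE; exact: parts_pow3.
Qed.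

End PartitionOfSeqs.

Lemma count_eq_andb_iota y b a k :
  count (fun i => (i == y) && b) (iota a k) = (a <= y < a + k) && b.
Proof.
case: b => /=.
  rewrite andbT -mem_iota -(count_uniq_mem y (iota_uniq a k)).
  by apply: eq_count => i; rewrite andbT.
by rewrite andbF (@eq_count _ _ pred0) ?count_pred0 // => i; rewrite andbF.
Qed.

Lemma count_mem_pairs (q m x : nat) (E : seq nat) : m.*2 < q ->
  count (fun s => x \in s) [seq [:: i; q - i] | i <- iota 1 m & i \notin E]
  = ((0 < x <= m) && (x \notin E)) + ((0 < q - x <= m) && (q - x \notin E)).
Proof.
move=> mq; have iota_range y : (0 < y <= m) = (1 <= y < 1 + m).
  by rewrite add1n ltnS.
rewrite count_map count_filter !iota_range -!count_eq_andb_iota -count_predUI.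
have -> : count (predI (fun i => (i == x) && (x \notin E))
                       (fun i => (i == q - x) && (q - x \notin E))) (iota 1 m) = 0.
  apply/eqP; rewrite -leqn0 leqNgt -has_count; apply/hasP => -[i].
  by rewrite mem_iota /= => ? /andP[/andP[/eqP ix _] /andP[/eqP iqx _]]; lia.
rewrite addn0; apply: eq_in_count => i; rewrite mem_iota /= !inE => i_range.
have -> : (x == q - i) = (i == q - x) by apply/eqP/eqP; lia.
rewrite (eq_sym x); have [<-|_] := eqVneq i x.
  have /negPf-> : i != q - i by apply/eqP; lia.
  by rewrite /= orbF.
by have [<-|_] := eqVneq i (q - x).
Qed.

(* lia alone is hopeless on the whole sum of tests; evaluating the tests one at a
   time in a fixed range of x keeps every call small. *)
Ltac decide_comparisons :=
  repeat match goal with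
  | |- context [?a == ?b] =>
      first [ rewrite (_ : (a == b) = false); last (apply/eqP; lia)
            | rewrite (_ : (a == b) = true); last (apply/eqP; lia) ]
  | |- context [?a <= ?b] =>
      first [ rewrite (_ : (a <= b) = false); last (apply/negbTE/negP; lia)
            | rewrite (_ : (a <= b) = true); last by lia ]
  end.

Lemma count_explicit_parts t x : 4 <= t -> 0 < x <= 3 ^ t + 11 ->
  count (fun s => x \in s) (explicit_parts t) = 1.
Proof.
rewrite /explicit_parts; set q := 3 ^ t => t_ge4 x_range.
have q_ge81 : 81 <= q by rewrite (_ : 81 = 3 ^ 4) // leq_pexp2l.
have q_odd : odd q by rewrite oddX orbT.
set m := (q - 1) %/ 2.
have q_def : q = m.*2.+1.
  by move: (odd_double_half q); rewrite q_odd /m; lia.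
rewrite count_cat count_mem_pairs ?q_def ?ltnSn //= !inE.
have m_ge40 : 40 <= m by lia.
clearbody m q; subst q; clear t_ge4 q_ge81 q_odd.
have [x_le15|x_gt15] := leqP x 15; first by decide_comparisons; lia.
have [x_le_m|x_gt_m] := leqP x m; first by decide_comparisons.
have [x_lt|x_ge] := ltnP x (m.*2.+1 - 15); first by decide_comparisons.
have [x_lt_q|x_ge_q] := ltnP x m.*2.+1.
  have : m.*2.+1 - x \in iota 1 15 by rewrite mem_iota; lia.
  rewrite !inE; do ![move/orP=> [/eqP ?|]]; last move/eqP=> ?;
    by decide_comparisons.
have : x - m.*2.+1 \in iota 0 12 by rewrite mem_iota; lia.
rewrite !inE; do ![move/orP=> [/eqP ?|]]; last move/eqP=> ?;
  by decide_comparisons.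
Qed.

Lemma explicit_part_wf t s : 4 <= t -> s \in explicit_parts t ->
  [/\ 0 < size s <= 3, uniq s, all (fun x => 0 < x <= 3 ^ t + 11) s
     & is_pow3 (sumn s)].
Proof.
rewrite /explicit_parts; set q := 3 ^ t => t_ge4.
have q_ge81 : 81 <= q by rewrite (_ : 81 = 3 ^ 4) // leq_pexp2l.
rewrite mem_cat => /orP[/mapP[i]|].
  rewrite mem_filter mem_iota => /andP[_ i_range] ->.
  have i_lt : i.*2 < q by lia.
  rewrite /= !inE andbT addn0; split=> //; [apply/eqP; lia | lia | exists t; lia].
have pow3_3q k : k = 3 * q -> is_pow3 k by move=> ->; exists t.+1; rewrite expnS.
rewrite !inE; do ![move/orP=> [/eqP->|]]; last move/eqP->;
  split; rewrite /= ?inE; try lia;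
  by [exists 1 | exists 2 | exists 3 | apply: pow3_3q; lia].
Qed.

Lemma three_good_explicit_partition t :
  4 <= t -> three_good (explicit_partition t).
Proof.
move=> t_ge4; apply: three_good_partition_of_seqs => [s|s|s x|x|s] sp.
- by case: (explicit_part_wf t_ge4 sp).
- by case: (explicit_part_wf t_ge4 sp).
- by case: (explicit_part_wf t_ge4 sp) => _ _ /allP/(_ x).
- exact: count_explicit_parts.
- by case: (explicit_part_wf t_ge4 sp).
Qed.

Definition parts_38 : seq (seq nat) :=
  [:: [:: 38; 37; 6]; [:: 36; 35; 10]; [:: 34; 30; 17]; [:: 33; 29; 19];
      [:: 32; 28; 21]; [:: 31; 26; 24]; [:: 27]; [:: 25; 2]; [:: 23; 4];
      [:: 22; 5]; [:: 20; 7]; [:: 18; 9]; [:: 16; 11]; [:: 15; 12];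
      [:: 14; 13]; [:: 8; 1]; [:: 3]].

Lemma three_good_parts_38 : three_good (partition_of_seqs 38 parts_38).
Proof.
apply: three_good_partition_of_seqs.
- by apply/allP.
- by apply/allP.
- move=> s x /(allP (isT : all (all (fun x => 0 < x <= 38)) parts_38)).
  by move/allP; apply.
- move=> x /andP[x_gt0 x_le38]; apply/eqP.
  apply: (allP (isT : all (fun x => count (fun s => x \in s) parts_38 == 1) (iota 1 38))).
  by rewrite mem_iota; lia.
- move=> s /(allP (isT : all (fun s => sumn s \in [seq 3 ^ k | k <- iota 0 5]) parts_38)).
  by case/mapP=> k _ ->; exists k.
Qed.

Theorem mainTheorem12 :
  (forall t : nat, 3 <= t ->
     exists P : {set {set 'I_(3 ^ t + 11).+1}}, three_good P) /\
  (forall t : nat, 4 <= t -> three_good (explicit_partition t)).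
Proof.
split=> [t|]; last exact: three_good_explicit_partition.
rewrite leq_eqVlt => /predU1P[<-|t_ge4]; first by eexists; exact: three_good_parts_38.
by eexists; exact: three_good_explicit_partition.
Qed.
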